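(* Consider the decoding setting fixed in the context. Let $t_j=|\mathcal{A}_j|$ and run the index-collision-resolution procedure with $\hat t_j=t_j$. Assume that (no $E_1$) $t_j\le T$, and that (no $E_2$) whenever, during this run, the decoder $D$ of $\mathcal{C}$ is applied to a vector of the form $[\mathbf{c}+\tilde{\mathbf{z}}_j/2^{\ell}]\bmod 2$ with $\mathbf{c}\in\mathcal{C}$ and $\ell$ a nonnegative integer, it outputs $\mathbf{c}$. Then, for every iteration $\ell\ge1$ performed by the procedure: (i) $\hat t^{(\ell)}_j=|\mathcal{A}^{(\ell)}_j|$; (ii) $\mathbf{y}^{(\ell)}_j=\sum_{i\in\mathcal{A}^{(\ell)}_j}\mathbf{x}_{i,j}+\mathbf{z}_j/2^{\ell-1}$; (iii) the decoding $\Phi(\mathbf{y}^{(\ell)}_j,\hat t^{(\ell)}_j)$ of the $\ell$-th iteration is successful; (iv) $\mathcal{L}^{(\ell)}=\mathcal{U}(\mathcal{A}^{(\ell)}_j\setminus\mathcal{B}^{(\ell)}_j)$. Moreover, for the final iteration $\tau$, $\mathcal{B}^{(\tau)}_j=\emptyset$, and hence $\mathcal{L}^{(\tau)}=\mathcal{U}(\mathcal{A}^{(\tau)}_j)$.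
   Context: Codes. Let $\mathbf{H}\in\{0,1\}^{m_p\times n_p}$ be a parity-check matrix of a binary linear code $\mathcal{C}_{\mathrm{aux}}$ of length $n_p$ with minimum Hamming distance $d$, and let $T=\lfloor (d-1)/2\rfloor$; denote the $u$-th column of $\mathbf{H}$ by $\mathbf{h}_u$. Let $\mathbf{G}\in\{0,1\}^{m_p\times n}$ be a generator matrix (full row rank) of a binary linear code $\mathcal{C}$ of length $n$ and dimension $m_p$. For $u\in\{1,\dots,n_p\}$ put $\mathbf{c}(u)=\mathbf{h}_u^T\mathbf{G}\bmod 2$ and define $\mathbf{x}(u)\in\mathbb{R}^n$ componentwise by $\mathbf{x}(u)_k=2a(\mathbf{c}(u)_k-1/2)$, where $a>0$ is fixed. Channel. In sub-block $j$, a finite set $\mathcal{A}_j$ of users transmits; user $i\in\mathcal{A}_j$ chose $u_i\in\{1,\dots,n_p\}$ and sends $\mathbf{x}_{i,j}=\mathbf{x}(u_i)$. The received vector is $\mathbf{y}_j=\sum_{i\in\mathcal{A}_j}\mathbf{x}(u_i)+\mathbf{z}_j$ with noise $\mathbf{z}_j\in\mathbb{R}^n$; put $\tilde{\mathbf{z}}_j=\mathbf{z}_j/(2a)$. ''$\bmod 2$'' on real vectors is componentwise reduction into $[0,2)$. Basic decoder $\Phi$. For $\mathbf{y}\in\mathbb{R}^n$ and integer $\hat t\ge0$: form $\tilde{\mathbf{y}}=[\mathbf{y}/(2a)+\hat t/2]\bmod 2$; apply a decoder $D$ for $\mathcal{C}$, obtaining $\tilde{\mathbf{c}}\in\mathcal{C}$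 (or a flagged error); recover the unique $\tilde{\mathbf{h}}$ with $\tilde{\mathbf{h}}^T\mathbf{G}=\tilde{\mathbf{c}}\bmod 2$; apply the bounded-distance syndrome decoder of $\mathcal{C}_{\mathrm{aux}}$, which returns the unique $S\subseteq\{1,\dots,n_p\}$ with $|S|\le T$ and $\sum_{u\in S}\mathbf{h}_u=\tilde{\mathbf{h}}\bmod 2$ if it exists and flags an error otherwise. $\Phi(\mathbf{y},\hat t)$ is the returned set (or $\emptyset$ with a flagged error). ICR procedure for an estimate $\hat t_j$: $\mathbf{y}^{(1)}_j=\mathbf{y}_j$, $\hat t^{(1)}_j=\hat t_j$, $\mathcal{L}^{(1)}=\Phi(\mathbf{y}^{(1)}_j,\hat t^{(1)}_j)$. For $\ell\ge1$: if $|\mathcal{L}^{(\ell)}|=\hat t^{(\ell)}_j$, stop with $\tau=\ell$ and return $\mathcal{L}^{(1)},\dots,\mathcal{L}^{(\tau)}$; if $|\mathcal{L}^{(\ell)}|>\hat t^{(\ell)}_j$, return an error; if $|\mathcal{L}^{(\ell)}|<\hat t^{(\ell)}_j$, set $\hat t^{(\ell+1)}_j=(\hat t^{(\ell)}_j-|\mathcal{L}^{(\ell)}|)/2$ (error if not an integer), $\mathbf{y}^{(\ell+1)}_j=(\mathbf{y}^{(\ell)}_j-\sum_{u\in\mathcal{L}^{(\ell)}}\mathbf{x}(u))/2$, $\mathcal{L}^{(\ell+1)}=\Phi(\mathbf{y}^{(\ell+1)}_j,\hat t^{(\ell+1)}_j)$, and continue. Auxiliary sets. For $u\in\{1,\dots,n_p\}$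 let $\mathcal{A}^{(1)}_j(u)=\{i\in\mathcal{A}_j:u_i=u\}$. For $\ell\ge1$, let $\mathcal{B}^{(\ell)}_j(u)\subseteq\mathcal{A}^{(\ell)}_j(u)$ be an (arbitrary) subset with $|\mathcal{B}^{(\ell)}_j(u)|=2\lfloor|\mathcal{A}^{(\ell)}_j(u)|/2\rfloor$, and $\mathcal{A}^{(\ell+1)}_j(u)\subseteq\mathcal{B}^{(\ell)}_j(u)$ an (arbitrary) subset with $|\mathcal{A}^{(\ell+1)}_j(u)|=|\mathcal{B}^{(\ell)}_j(u)|/2$. Put $\mathcal{A}^{(\ell)}_j=\bigcup_u\mathcal{A}^{(\ell)}_j(u)$, $\mathcal{B}^{(\ell)}_j=\bigcup_u\mathcal{B}^{(\ell)}_j(u)$. For a set $\mathcal{S}$ of users, $\mathcal{U}(\mathcal{S})=\{u_i:i\in\mathcal{S}\}$. *)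

From HB Require Import structures.
From mathcomp Require Import all_boot all_order all_algebra.
From mathcomp Require Import reals.
Set Implicit Arguments. Unset Strict Implicit. Unset Printing Implicit Defensive.
Import Order.TTheory GRing.Theory Num.Theory.
Local Open Scope ring_scope.

Definition f2R {R : pzRingType} (b : 'F_2) : R := (nat_of_ord b)%:R.

Definition wt {k : nat} (v : 'rV['F_2]_k) : nat := #|[set j | v 0 j != 0]|.

Definition is_min_dist {mp np : nat} (H : 'M['F_2]_(mp, np)) (d : nat) : Prop :=
  (exists v : 'rV['F_2]_np, [/\ H *m v^T = 0, v != 0 & wt v = d]) /\
  (forall v : 'rV['F_2]_np, H *m v^T = 0 -> v != 0 -> (d <= wt v)%N).

Definition in_code {mp n : nat} (G : 'M['F_2]_(mp, n)) (c : 'rV['F_2]_n) : Prop :=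
  exists m : 'rV['F_2]_mp, c = m *m G.

Definition mod2 {R : realType} (r : R) : R := r - 2 * (Num.floor (r / 2))%:~R.
Definition mod2v {R : realType} {n : nat} (v : 'rV[R]_n) : 'rV[R]_n := map_mx mod2 v.

Section Setting.
Context {R : realType} {mp np n : nat}
  (H : 'M['F_2]_(mp, np)) (G : 'M['F_2]_(mp, n)) (a : R) (T : nat)
  (D : 'rV[R]_n -> option 'rV['F_2]_n).

Definition cw (u : 'I_np) : 'rV['F_2]_n := (col u H)^T *m G.

Definition xsig (u : 'I_np) : 'rV[R]_n :=
  \row_k (2 * a * (f2R (cw u 0 k) - 2^-1)).

Definition D_input (y : 'rV[R]_n) (t : nat) : 'rV[R]_n :=
  mod2v (map_mx (fun r => r / (2 * a) + t%:R / 2) y).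

(* Bounded-distance syndrome decoder of C_aux: the (unique, when 2T < d) set S
   with |S| <= T and sum_{u in S} h_u = h; None = flagged error. *)
Definition synd_dec (h : 'rV['F_2]_mp) : option {set 'I_np} :=
  [pick S : {set 'I_np} | (#|S| <= T)%N && (\sum_(u in S) (col u H)^T == h)].

(* Basic decoder Phi; None = flagged error (the returned set is then empty).
   h~ with h~^T G = c~ is recovered as c~ *m pinvmx G (unique as G has full
   row rank and c~ is a codeword). *)
Definition Phi (y : 'rV[R]_n) (t : nat) : option {set 'I_np} :=
  match D (D_input y t) with
  | None => None
  | Some c => synd_dec (c *m pinvmx G)
  end.

Definition Lset (y : 'rV[R]_n) (t : nat) : {set 'I_np} := odflt set0 (Phi y t).

(* ICR state: index k (0-based) corresponds to iteration l = k+1. *)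
Fixpoint icr_state (y0 : 'rV[R]_n) (t0 : nat) (k : nat) : 'rV[R]_n * nat :=
  match k with
  | 0 => (y0, t0)
  | k'.+1 =>
      let st := icr_state y0 t0 k' in
      let L := Lset st.1 st.2 in
      (2^-1 *: (st.1 - \sum_(u in L) xsig u), ((st.2 - #|L|) %/ 2)%N)
  end.

Definition icr_y y0 t0 k := (icr_state y0 t0 k).1.
Definition icr_t y0 t0 k := (icr_state y0 t0 k).2.
Definition icr_L y0 t0 k := Lset (icr_y y0 t0 k) (icr_t y0 t0 k).

(* Iteration k is performed: every earlier iteration k' neither stopped
   (|L| = t), nor raised an error (|L| > t, or t - |L| odd). *)
Definition icr_reached y0 t0 k : Prop :=
  forall k', (k' < k)%N ->
    (#|icr_L y0 t0 k'| < icr_t y0 t0 k')%N /\ ~~ odd (icr_t y0 t0 k' - #|icr_L y0 t0 k'|).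

End Setting.

(* Auxiliary sets A^(l)(u), B^(l)(u) (0-based index k = l-1). *)
Definition aux_sets {I : finType} {np : nat} (A : {set I}) (uf : I -> 'I_np)
  (Aset Bset : nat -> 'I_np -> {set I}) : Prop :=
  (forall u, Aset 0%N u = [set i in A | uf i == u]) /\
  (forall k u, Bset k u \subset Aset k u /\ #|Bset k u| = (2 * (#|Aset k u| %/ 2))%N) /\
  (forall k u, Aset k.+1 u \subset Bset k u /\ #|Aset k.+1 u| = (#|Bset k u| %/ 2)%N).

Definition Aall {I : finType} {np : nat} (Aset : nat -> 'I_np -> {set I}) k : {set I} :=
  \bigcup_(u : 'I_np) Aset k u.

Definition Uset {I : finType} {np : nat} (uf : I -> 'I_np) (S : {set I}) : {set 'I_np} :=
  uf @: S.

From HB Require Import structures.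
From mathcomp Require Import all_boot all_order all_algebra.
From mathcomp Require Import reals.
From mathcomp Require Import zify ring lra.
Set Implicit Arguments. Unset Strict Implicit. Unset Printing Implicit Defensive.
Import Order.TTheory GRing.Theory Num.Theory.
Local Open Scope ring_scope.

(* In iteration k the unresolved users are A_k, the union of the sets A_k(u), and
   y_k = sum_(i in A_k) x(u_i) + z / 2^k with t_k = |A_k|.  Dividing by 2a and adding
   t_k/2 turns each x(u_i) into the 0/1 vector c(u_i); reducing mod 2 turns the real sum
   into the F_2 codeword sum_i c(u_i) = (sum_i h_(u_i))^T G, in which every index of even
   multiplicity cancels.  So D returns the codeword of the sum of h_u over the indices u
   of odd multiplicity, which are at most t <= T many, and the syndrome decoder recovers
   exactly that set, namely U(A_k \ B_k).  Removing their signals leaves each index with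
   multiplicity 2 |A_(k+1)(u)|, and halving gives the invariant for k+1.  At the final
   iteration |L| = t_k forces all multiplicities to be 0 or 1, i.e. B_k is empty. *)

Lemma mod2_addr_even (R : realType) (w : R) (m : nat) :
  mod2 (w + (2 * m)%:R) = mod2 w.
Proof.
rewrite /mod2; have -> : (w + (2 * m)%:R) / 2 = w / 2 + (m%:Z)%:~R.
  by rewrite natrM mulrDl [_ * m%:R]mulrC mulfK ?pnatr_eq0.
by rewrite floorDrz ?intr_int // intrKfloor intrD natrM /=; lra.
Qed.

Lemma val_sum_F2 (J : Type) (s : seq J) (P : pred J) (b : J -> 'F_2) :
  nat_of_ord (\sum_(i <- s | P i) b i) = ((\sum_(i <- s | P i) nat_of_ord (b i)) %% 2)%N.
Proof. by elim/big_rec2: _ => [//|i x y _ IH]; rewrite -modnDmr -IH. Qed.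

Lemma mod2_sum_f2R (R : realType) (J : Type) (s : seq J) (P : pred J) (b : J -> 'F_2) (w : R) :
  mod2 (\sum_(i <- s | P i) f2R (b i) + w) = mod2 (f2R (\sum_(i <- s | P i) b i) + w).
Proof.
rewrite /f2R val_sum_F2 -natr_sum {1}(divn_eq (\sum_(i <- s | P i) _) 2).
by rewrite natrD -addrA addrC mulnC mod2_addr_even.
Qed.

Lemma mulr2n_F2 (V : lmodType 'F_2) (v : V) : v *+ 2 = 0.
Proof. by rewrite -scaler_nat (_ : 2%:R = 0 :> 'F_2) ?scale0r //; apply/eqP. Qed.

Lemma D_input_superposition (R : realType) (mp np n : nat)
    (H : 'M['F_2]_(mp, np)) (G : 'M['F_2]_(mp, n)) (a : R)
    (J : finType) (S : {set J}) (f : J -> 'I_np) (w : 'rV[R]_n) :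
  a != 0 ->
  D_input a (\sum_(i in S) xsig H G a (f i) + w) #|S|
    = mod2v (map_mx f2R (\sum_(i in S) cw H G (f i)) + (2 * a)^-1 *: w).
Proof.
move=> a0; have a20 : 2 * a != 0 by rewrite mulf_neq0 ?pnatr_eq0.
apply/rowP => j; rewrite !mxE !summxE -mod2_sum_f2R; congr mod2.
rewrite mulrDl mulr_suml.
under eq_bigr => i _ do rewrite /xsig mxE mulrC mulKf //.
by rewrite sumrB sumr_const -mulr_natr; field.
Qed.

Section SyndromeDecoding.
Variables (mp np : nat) (H : 'M['F_2]_(mp, np)).

Definition indicator_row (S : {set 'I_np}) : 'rV['F_2]_np := \row_u (u \in S)%:R.

Lemma indicator_row_inj : injective indicator_row.
Proof.
move=> S1 S2 eq12; apply/setP => u.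
have := congr1 (fun v : 'rV['F_2]_np => v 0 u) eq12; rewrite /= !mxE.
by case: (u \in S1); case: (u \in S2).
Qed.

Lemma mul_indicator_row_tr (S : {set 'I_np}) :
  indicator_row S *m H^T = \sum_(u in S) (col u H)^T.
Proof.
rewrite mulmx_sum_row [RHS]big_mkcond; apply: eq_bigr => u _.
by rewrite mxE tr_col; case: (u \in S); rewrite ?scale1r ?scale0r.
Qed.

Lemma wt_gt0 (v : 'rV['F_2]_np) : v != 0 -> (0 < wt v)%N.
Proof.
move=> v0; rewrite /wt card_gt0; apply: contraNneq v0 => /setP v_eq0.
by apply/eqP/rowP => u; have := v_eq0 u; rewrite !inE mxE => /negbFE/eqP.
Qed.

Lemma wt_indicator_rowB (S1 S2 : {set 'I_np}) :
  (wt (indicator_row S1 - indicator_row S2) <= #|S1| + #|S2|)%N.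
Proof.
apply: leq_trans (leq_card_setU S1 S2).
apply: subset_leq_card; apply/subsetP => u; rewrite !inE !mxE.
by case: (u \in S1); case: (u \in S2).
Qed.

Variable d : nat.
Hypothesis H_dist : is_min_dist H d.

Lemma sum_cols_inj (S1 S2 : {set 'I_np}) :
  (#|S1| <= (d.-1) %/ 2)%N -> (#|S2| <= (d.-1) %/ 2)%N ->
  \sum_(u in S1) (col u H)^T = \sum_(u in S2) (col u H)^T -> S1 = S2.
Proof.
move=> S1T S2T eq_sums; apply: indicator_row_inj; apply/eqP; rewrite -subr_eq0.
apply/negPn/negP => v0; set v := _ - _ in v0.
have v_ker : H *m v^T = 0.
  by apply: trmx_inj; rewrite trmx_mul trmxK mulmxBl !mul_indicator_row_tr eq_sums subrr trmx0.
have := H_dist.2 v v_ker v0; have := wt_gt0 v0; have := wt_indicator_rowB S1 S2.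
rewrite -/v; lia.
Qed.

Lemma synd_dec_sum_cols (S : {set 'I_np}) :
  (#|S| <= (d.-1) %/ 2)%N ->
  synd_dec H ((d.-1) %/ 2) (\sum_(u in S) (col u H)^T) = Some S.
Proof.
move=> ST; rewrite /synd_dec; case: pickP => [S' /andP[S'T /eqP eq_sums] | none].
  by congr Some; apply: sum_cols_inj.
by have := none S; rewrite ST eqxx.
Qed.

End SyndromeDecoding.

Lemma Phi_sum_cw (R : realType) (mp np n d : nat) (H : 'M['F_2]_(mp, np))
    (G : 'M['F_2]_(mp, n)) (a : R) (D : 'rV[R]_n -> option 'rV['F_2]_n)
    (y : 'rV[R]_n) (t : nat) (S : {set 'I_np}) :
  row_free G -> is_min_dist H d -> (#|S| <= (d.-1) %/ 2)%N ->
  D (D_input a y t) = Some (\sum_(u in S) cw H G u) ->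
  Phi H G a ((d.-1) %/ 2) D y t = Some S.
Proof.
move=> G_free H_dist ST D_ok; rewrite /Phi D_ok /cw -mulmx_suml.
by rewrite -mulmxA mulmxVp // mulmx1 synd_dec_sum_cols.
Qed.

Lemma sum_bigcup_fibres (J : finType) (np : nat) (f : J -> 'I_np)
    (S : 'I_np -> {set J}) (V : nmodType) (F : 'I_np -> V) :
  (forall u i, i \in S u -> f i = u) ->
  \sum_(i in \bigcup_(u : 'I_np) S u) F (f i) = \sum_(u : 'I_np) F u *+ #|S u|.
Proof.
move=> fS; rewrite (partition_big f predT) //=; apply: eq_bigr => u _.
rewrite -sumr_const; apply: eq_big => [i | i /andP[_ /eqP ->]] //=.
apply/andP/idP => [[/bigcupP[u' _ iS] /eqP <-] | iS]; first by rewrite (fS _ _ iS).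
by rewrite (fS _ _ iS); split => //; apply/bigcupP; exists u.
Qed.

Section AuxiliarySets.
Variables (I : finType) (np : nat) (A : {set I}) (uf : I -> 'I_np).
Variables (Aset Bset : nat -> 'I_np -> {set I}).
Hypothesis aux : aux_sets A uf Aset Bset.

Definition odd_indices k : {set 'I_np} := [set u | odd #|Aset k u|].

Lemma Bset_sub k u : Bset k u \subset Aset k u.
Proof. exact: (aux.2.1 k u).1. Qed.

Lemma Aset_fibre k u i : i \in Aset k u -> uf i = u.
Proof.
elim: k u i => [|k IHk] u i; first by rewrite aux.1 inE => /andP[_ /eqP].
by move=> /(subsetP (aux.2.2 k u).1) /(subsetP (Bset_sub k u)); apply: IHk.
Qed.

Lemma card_Aset_succ k u : #|Aset k.+1 u| = (#|Aset k u| %/ 2)%N.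
Proof. by rewrite (aux.2.2 k u).2 (aux.2.1 k u).2 mulKn. Qed.

Lemma card_AsetDBset k u : #|Aset k u :\: Bset k u| = odd #|Aset k u|.
Proof.
rewrite cardsD (setIidPr (Bset_sub k u)) (aux.2.1 k u).2.
by rewrite {1}(divn_eq #|Aset k u| 2) mulnC addKn modn2.
Qed.

Lemma Aall0 : Aall Aset 0 = A.
Proof.
apply/setP => i; apply/bigcupP/idP => [[u _] | iA]; first by rewrite aux.1 inE => /andP[].
by exists (uf i) => //; rewrite aux.1 inE iA eqxx.
Qed.

Lemma sum_Aall (V : nmodType) k (F : 'I_np -> V) :
  \sum_(i in Aall Aset k) F (uf i) = \sum_(u : 'I_np) F u *+ #|Aset k u|.
Proof. exact: sum_bigcup_fibres (@Aset_fibre k). Qed.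

Lemma sum_Aall_succ (V : nmodType) k (F : 'I_np -> V) :
  \sum_(i in Aall Aset k) F (uf i)
    = \sum_(u in odd_indices k) F u + (\sum_(i in Aall Aset k.+1) F (uf i)) *+ 2.
Proof.
rewrite !sum_Aall -sumrMnl [X in X + _]big_mkcond -big_split; apply: eq_bigr => u _.
rewrite inE card_Aset_succ -mulrnA {1}(divn_eq #|Aset k u| 2) mulrnDr modn2 addrC.
by case: odd.
Qed.

Lemma card_Aall_succ k :
  #|Aall Aset k| = (#|odd_indices k| + 2 * #|Aall Aset k.+1|)%N.
Proof.
have := sum_Aall_succ k (fun=> 1%N); rewrite !sum1_card => ->.
by rewrite mulr2n; lia.
Qed.

Lemma card_Aall_le k : (#|Aall Aset k| <= #|A|)%N.
Proof.
elim: k => [|k IHk]; first by rewrite Aall0.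
by apply: leq_trans IHk; rewrite (card_Aall_succ k); lia.
Qed.

Lemma card_odd_indices_le k : (#|odd_indices k| <= #|Aall Aset k|)%N.
Proof. by rewrite card_Aall_succ leq_addr. Qed.

Lemma Uset_odd_indices k : Uset uf (Aall Aset k :\: Aall Bset k) = odd_indices k.
Proof.
apply/setP => u; rewrite inE -[odd _]lt0b -card_AsetDBset card_gt0.
apply/imsetP/set0Pn => [[i /setDP[/bigcupP[u' _ iA] iNB] ->] | [i /setDP[iA iNB]]].
  rewrite (Aset_fibre iA); exists i; rewrite inE iA andbT.
  by apply: contra iNB => iB; apply/bigcupP; exists u'.
exists i; last by rewrite (Aset_fibre iA).
rewrite inE; apply/andP; split; last by apply/bigcupP; exists u.
apply/bigcupP => -[u' _ iB]; move/negP: iNB; apply.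
by have := Aset_fibre (subsetP (Bset_sub k u') _ iB); rewrite (Aset_fibre iA) => ->.
Qed.

Lemma Aall_Bset_eq0 k : #|odd_indices k| = #|Aall Aset k| -> Aall Bset k = set0.
Proof.
rewrite card_Aall_succ => /eqP; rewrite -{1}[#|odd_indices k|]addn0 eqn_add2l eq_sym.
rewrite muln_eq0 /= cards_eq0 => /eqP Anext0.
apply/setP => i; rewrite inE; apply/bigcupP => -[u _ iB].
have Anext_u : Aset k.+1 u = set0.
  by apply/eqP; rewrite -subset0 -Anext0; apply: (bigcup_sup u).
have /eqP : #|Bset k u| = 0%N by rewrite (aux.2.1 k u).2 -card_Aset_succ Anext_u cards0.
by rewrite cards_eq0 => /eqP Bu; rewrite Bu inE in iB.
Qed.

End AuxiliarySets.

Section ICRRun.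
Variables (R : realType) (mp np n : nat).
Variables (H : 'M['F_2]_(mp, np)) (G : 'M['F_2]_(mp, n)) (d : nat) (a : R).
Variables (D : 'rV[R]_n -> option 'rV['F_2]_n).
Variables (I : finType) (A : {set I}) (uf : I -> 'I_np) (z : 'rV[R]_n).
Variables (Aset Bset : nat -> 'I_np -> {set I}).
Hypotheses (G_free : row_free G) (H_dist : is_min_dist H d) (a_gt0 : 0 < a).
Hypothesis aux : aux_sets A uf Aset Bset.

Local Notation T := ((d.-1) %/ 2)%N.
Local Notation y0 := (\sum_(i in A) xsig H G a (uf i) + z).
Local Notation y_ k := (icr_y H G a T D y0 #|A| k).
Local Notation t_ k := (icr_t H G a T D y0 #|A| k).
Local Notation L_ k := (icr_L H G a T D y0 #|A| k).
Local Notation reached k := (icr_reached H G a T D y0 #|A| k).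

Hypothesis no_E1 : (#|A| <= T)%N.
Hypothesis no_E2 : forall k, reached k ->
  forall (c : 'rV['F_2]_n) (l : nat), in_code G c ->
  D_input a (y_ k) (t_ k) = mod2v (map_mx f2R c + (2 ^+ l)^-1 *: ((2 * a)^-1 *: z)) ->
  D (D_input a (y_ k) (t_ k)) = Some c.

Lemma Phi_icr_odd_indices k :
  reached k -> t_ k = #|Aall Aset k| ->
  y_ k = \sum_(i in Aall Aset k) xsig H G a (uf i) + (2 ^+ k)^-1 *: z ->
  Phi H G a T D (y_ k) (t_ k) = Some (odd_indices Aset k).
Proof.
move=> reached_k t_k y_k; apply: Phi_sum_cw G_free H_dist _ _.
  exact: leq_trans (card_odd_indices_le aux k) (leq_trans (card_Aall_le aux k) no_E1).
apply: (@no_E2 k reached_k _ k).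
  by exists (\sum_(u in odd_indices Aset k) (col u H)^T); rewrite /cw mulmx_suml.
rewrite y_k t_k D_input_superposition ?gt_eqF // (sum_Aall_succ aux k (cw H G)).
by rewrite mulr2n_F2 addr0 !scalerA mulrC.
Qed.

Lemma icr_invariant k : reached k ->
  t_ k = #|Aall Aset k| /\
  y_ k = \sum_(i in Aall Aset k) xsig H G a (uf i) + (2 ^+ k)^-1 *: z.
Proof.
elim: k => [_ | k IHk reached_k1]; first by rewrite (Aall0 aux) expr0 invr1 scale1r.
have reached_k : reached k by move=> k' /ltnW; apply: reached_k1.
have [t_k y_k] := IHk reached_k.
have L_k : L_ k = odd_indices Aset k.
  by rewrite /icr_L /Lset (Phi_icr_odd_indices reached_k t_k y_k).
split.
  change (t_ k.+1) with ((t_ k - #|L_ k|) %/ 2)%N.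
  by rewrite L_k t_k (card_Aall_succ aux k) addKn mulKn.
change (y_ k.+1) with (2^-1 *: (y_ k - \sum_(u in L_ k) xsig H G a u)).
rewrite L_k y_k (sum_Aall_succ aux k) addrC addrA addKr scalerDr -scaler_nat !scalerA.
by rewrite mulVf ?pnatr_eq0 // scale1r exprS invfM.
Qed.

Lemma icr_iteration_correct k : reached k ->
  [/\ t_ k = #|Aall Aset k|,
      y_ k = \sum_(i in Aall Aset k) xsig H G a (uf i) + (2 ^+ k)^-1 *: z,
      (exists S, Phi H G a T D (y_ k) (t_ k) = Some S) &
      L_ k = Uset uf (Aall Aset k :\: Aall Bset k)].
Proof.
move=> reached_k; have [t_k y_k] := icr_invariant reached_k.
have Phi_k := Phi_icr_odd_indices reached_k t_k y_k.
split=> //; first by exists (odd_indices Aset k).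
by rewrite /icr_L /Lset Phi_k (Uset_odd_indices aux).
Qed.

Lemma icr_final_correct tau : reached tau -> #|L_ tau| = t_ tau ->
  Aall Bset tau = set0 /\ L_ tau = Uset uf (Aall Aset tau).
Proof.
move=> reached_tau stop; have [t_tau y_tau] := icr_invariant reached_tau.
have L_tau : L_ tau = odd_indices Aset tau.
  by rewrite /icr_L /Lset (Phi_icr_odd_indices reached_tau t_tau y_tau).
have B0 : Aall Bset tau = set0 by apply: (Aall_Bset_eq0 aux); rewrite -L_tau stop.
by rewrite L_tau -(Uset_odd_indices aux) B0 setD0.
Qed.

End ICRRun.

Theorem lemma1 (R : realType) (mp np n : nat)
  (H : 'M['F_2]_(mp, np)) (G : 'M['F_2]_(mp, n)) (d : nat) (a : R)
  (D : 'rV[R]_n -> option 'rV['F_2]_n)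
  (I : finType) (A : {set I}) (uf : I -> 'I_np) (z : 'rV[R]_n)
  (Aset Bset : nat -> 'I_np -> {set I}) :
  row_free G ->
  is_min_dist H d ->
  0 < a ->
  (forall v c, D v = Some c -> in_code G c) ->
  aux_sets A uf Aset Bset ->
  let T := ((d.-1) %/ 2)%N in
  let y := \sum_(i in A) xsig H G a (uf i) + z in
  let t := #|A| in
  (* no E1 *)
  (t <= T)%N ->
  (* no E2: every input to D during the run of the form [c + z~/2^l] mod 2 is decoded to c *)
  (forall k, icr_reached H G a T D y t k ->
     forall (c : 'rV['F_2]_n) (l : nat), in_code G c ->
       D_input a (icr_y H G a T D y t k) (icr_t H G a T D y t k)
         = mod2v (map_mx f2R c + (2 ^+ l)^-1 *: ((2 * a)^-1 *: z)) ->
       D (D_input a (icr_y H G a T D y t k) (icr_t H G a T D y t k)) = Some c) ->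
  (forall k, icr_reached H G a T D y t k ->
     [/\ icr_t H G a T D y t k = #|Aall Aset k|,
         icr_y H G a T D y t k = \sum_(i in Aall Aset k) xsig H G a (uf i) + (2 ^+ k)^-1 *: z,
         (exists S, Phi H G a T D (icr_y H G a T D y t k) (icr_t H G a T D y t k) = Some S) &
         icr_L H G a T D y t k = Uset uf (Aall Aset k :\: Aall Bset k)]) /\
  (forall tau, icr_reached H G a T D y t tau ->
     #|icr_L H G a T D y t tau| = icr_t H G a T D y t tau ->
     Aall Bset tau = set0 /\ icr_L H G a T D y t tau = Uset uf (Aall Aset tau)).
Proof.
move=> G_free H_dist a_gt0 _ aux T y t no_E1 no_E2.
split=> [k | tau].
  exact: icr_iteration_correct G_free H_dist a_gt0 aux no_E1 no_E2 k.
exact: icr_final_correct G_free H_dist a_gt0 aux no_E1 no_E2 tau.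
Qed.
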